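(* (a) For every integer $n \geq 4$, $8\left\lfloor \frac{n}{10} \right\rfloor + c(n_{10}) \leq \gamma_{b,2}(P_4 \square P_n)$, where $n_{10} \in \{0,1,\dots,9\}$ is the least residue of $n$ modulo $10$ and $c(0)=0$, $c(1)=2$, $c(2)=2$, $c(3)=3$, $c(4)=4$, $c(5)=5$, $c(6)=5$, $c(7)=6$, $c(8)=7$, $c(9)=8$. (b) For every integer $n \geq 4$ with $n \equiv 1, 4, 5,$ or $9 \pmod{10}$, equality holds: $\gamma_{b,2}(P_4 \square P_n) = 8\left\lfloor \frac{n}{10} \right\rfloor + c(n_{10})$.
   Context: For a graph $G$, a $2$-limited broadcast is a function $f: V(G) \to \{0,1,2\}$. A vertex $u$ hears the broadcast from $v$ if $f(v) > 0$ and $d(u,v) \leq f(v)$, where $d$ is the distance in $G$. The broadcast $f$ is dominating if every vertex of $G$ hears the broadcast from some vertex. The cost of $f$ is $\sum_{v \in V(G)} f(v)$. The $2$-limited broadcast domination number $\gamma_{b,2}(G)$ is the minimum cost of a $2$-limited dominating broadcast on $G$. $P_n$ denotes the path on $n$ vertices and $\square$ the Cartesian product of graphs. *)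

From mathcomp Require Import all_boot.
Set Implicit Arguments. Unset Strict Implicit. Unset Printing Implicit Defensive.

Definition path_adj (n : nat) : rel 'I_n :=
  fun i j => (i.+1 == j :> nat) || (j.+1 == i :> nat).

Definition cart_adj (T1 T2 : finType) (a1 : rel T1) (a2 : rel T2) : rel (T1 * T2)%type :=
  fun u v => ((u.1 == v.1) && a2 u.2 v.2) || (a1 u.1 v.1 && (u.2 == v.2)).

(* d(u,v) <= k in the graph (T, adj): there is a walk of length <= k. *)
Fixpoint within (T : finType) (adj : rel T) (k : nat) (u v : T) : bool :=
  if k is k'.+1 then (u == v) || [exists w, adj u w && within adj k' w v]
  else u == v.

Definition broadcast (T : finType) := {ffun T -> 'I_3}.

Definition hears (T : finType) (adj : rel T) (f : broadcast T) (u v : T) : bool :=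
  (0 < f v) && within adj (f v) u v.

Definition dominating (T : finType) (adj : rel T) (f : broadcast T) : bool :=
  [forall u, exists v, hears adj f u v].

Definition cost (T : finType) (f : broadcast T) : nat := \sum_(v : T) (f v : nat).

(* gamma_{b,2}(G): minimum cost of a dominating 2-limited broadcast.
   The default 2*|V| is never reached below it: the all-1 broadcast is
   dominating with cost |V|. *)
Definition gamma_b2 (T : finType) (adj : rel T) : nat :=
  \big[minn/(2 * #|T|)]_(f : broadcast T | dominating adj f) cost f.

Definition grid_adj (n : nat) : rel ('I_4 * 'I_n)%type := cart_adj (@path_adj 4) (@path_adj n).

Definition c_tab (r : nat) : nat :=
  nth 0 [:: 0; 2; 2; 3; 4; 5; 5; 6; 7; 8] r.

(* Lower bound: weight the columns of P_4 □ P_n by 5,2,2,5 and 2,0,0,2 at both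
   ends and 3,1,1,3 elsewhere, for a total weight of 8n + 4.  A vertex broadcasting
   at strength k in {1, 2} reaches weight at most 10k, so a dominating broadcast of
   cost c has 8n + 4 <= 10c, which is the bound after rounding.
   Upper bound: explicit broadcasts, periodic with a block of 10 columns and cost 8.
   Both the ball estimate and domination only involve the five columns around a
   vertex, and for column lists of the shape A ++ p^q ++ B every such window
   already occurs for a small q, so finitely many computations suffice. *)

From HB Require Import structures.
From mathcomp Require Import all_boot zify ssrint.
Set Implicit Arguments. Unset Strict Implicit. Unset Printing Implicit Defensive.

(* Lets [bigD1] split the minimum defining [gamma_b2]. *)
HB.instance Definition _ := SemiGroup.isComLaw.Build nat minn minnA minnC.

Section Broadcasts.
Variables (T : finType) (adj : rel T).

Definition ones_broadcast : broadcast T := [ffun=> inord 1].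

Lemma ones_broadcast_dominating : dominating adj ones_broadcast.
Proof.
apply/forallP => u; apply/existsP; exists u.
by rewrite /hears ffunE inordK //= eqxx.
Qed.

Lemma cost_le_2card (f : broadcast T) : cost f <= 2 * #|T|.
Proof.
apply: (@leq_trans (\sum_(v : T) 2)); last by rewrite sum_nat_const mulnC.
by apply: leq_sum => v _; rewrite -ltnS ltn_ord.
Qed.

Lemma gamma_b2_le_cost f : dominating adj f -> gamma_b2 adj <= cost f.
Proof. by move=> domf; rewrite /gamma_b2 (bigD1 f) //= geq_minl. Qed.

Lemma leq_gamma_b2 b : (forall f, dominating adj f -> b <= cost f) -> b <= gamma_b2 adj.
Proof.
move=> b_le; apply: (big_ind (fun x => b <= x)) => //.
- exact: leq_trans (b_le _ ones_broadcast_dominating) (cost_le_2card _).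
- by move=> x y; rewrite leq_min => ->.
Qed.

Lemma weight_le_cost (w : T -> nat) (C : nat) f :
  dominating adj f ->
  (forall v, 0 < f v -> \sum_(u | within adj (f v) u v) w u <= C * f v) ->
  \sum_u w u <= C * cost f.
Proof.
move=> /forallP domf ball_le.
apply: (@leq_trans (\sum_u \sum_(v | hears adj f u v) w u)).
  apply: leq_sum => u _; have [v huv] := existsP (domf u).
  by rewrite (bigD1 v) //= leq_addr.
rewrite (exchange_big_dep xpredT) //= /cost big_distrr /=; apply: leq_sum => v _.
have [fv0|fv_gt0] := posnP (f v); first by rewrite big_pred0 // => u; rewrite /hears fv0.
by rewrite (eq_bigl (fun u => within adj (f v) u v)) ?ball_le // => u; rewrite /hears fv_gt0.
Qed.

End Broadcasts.

Section GridDistance.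
Variables m n : nat.
Local Notation adj := (cart_adj (@path_adj m) (@path_adj n)).

Definition grid_dist (u v : 'I_m * 'I_n) : nat := `|u.1 - v.1| + `|u.2 - v.2|.

Lemma grid_dist_triangle u w v : grid_dist u v <= grid_dist u w + grid_dist w v.
Proof. rewrite /grid_dist; lia. Qed.

Lemma grid_adjE u w : adj u w = (grid_dist u w == 1).
Proof.
case: u w => [a b] [c d]; rewrite /cart_adj /path_adj /grid_dist /=.
rewrite -!(inj_eq val_inj) /=; lia.
Qed.

Lemma grid_dist_eq0 u v : (grid_dist u v == 0) = (u == v).
Proof.
case: u v => [a b] [c d]; rewrite /grid_dist xpair_eqE -!(inj_eq val_inj) /=; lia.
Qed.

Lemma grid_step u v : u != v -> exists2 w, adj u w & (grid_dist w v).+1 = grid_dist u v.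
Proof.
move=> neq_uv.
suff [w dist_uw dist_w] : exists2 w, grid_dist u w = 1 & (grid_dist w v).+1 = grid_dist u v.
  by exists w; rewrite // grid_adjE dist_uw.
case: u v neq_uv => [a b] [c d] neq_uv.
have [ltbd | ltdb | eqbd] := ltngtP b d.
- have lt_b1 : b.+1 < n by exact: leq_ltn_trans ltbd (ltn_ord d).
  by exists (a, Ordinal lt_b1); rewrite /grid_dist /=; lia.
- have lt_b1 : b.-1 < n by exact: leq_ltn_trans (leq_pred b) (ltn_ord b).
  by exists (a, Ordinal lt_b1); rewrite /grid_dist /=; lia.
have [ltac | ltca | eqac] := ltngtP a c.
- have lt_a1 : a.+1 < m by exact: leq_ltn_trans ltac (ltn_ord c).
  by exists (Ordinal lt_a1, b); rewrite /grid_dist /=; lia.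
- have lt_a1 : a.-1 < m by exact: leq_ltn_trans (leq_pred a) (ltn_ord a).
  by exists (Ordinal lt_a1, b); rewrite /grid_dist /=; lia.
by case/negP: neq_uv; rewrite xpair_eqE -!(inj_eq val_inj) /= eqac eqbd !eqxx.
Qed.

Lemma within_grid k u v : within adj k u v = (grid_dist u v <= k).
Proof.
elim: k u => [|k IH] u /=; first by rewrite leqn0 grid_dist_eq0.
apply/idP/idP => [/orP [/eqP -> | /existsP [w /andP [adj_uw]]] | dist_le].
- by rewrite /grid_dist; lia.
- rewrite IH => dist_wv; move: adj_uw; rewrite grid_adjE => /eqP dist_uw.
  by apply: leq_trans (grid_dist_triangle u w v) _; rewrite dist_uw.
have [//|neq_uv] := eqVneq u v; apply/orP; right; apply/existsP.
have [w adj_uw dist_w] := grid_step neq_uv.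
by exists w; rewrite adj_uw IH -ltnS dist_w.
Qed.

End GridDistance.

Section Repetition.
Variable T : Type.

Lemma size_flatten_nseq q (p : seq T) : size (flatten (nseq q p)) = size p * q.
Proof. by rewrite size_flatten /shape map_nseq sumn_nseq. Qed.

Lemma all_flatten_nseq (P : pred T) q p : all P (flatten (nseq q p)) = (q == 0) || all P p.
Proof. by elim: q => //= q IH; rewrite all_cat IH; case: (all P p); rewrite ?orbT. Qed.

Lemma take_drop_rep (A p B : seq T) q w c :
  size p + w <= (size p * q).+1 ->
  take w (drop c (A ++ flatten (nseq q.+1 p) ++ B)) =
  take w (drop (if c < size A + size p then c else c - size p) (A ++ flatten (nseq q p) ++ B)).
Proof.
move=> long_q; case: ifPn => [c_lt | ]; last first.
  rewrite -leqNgt => c_ge.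
  have -> : A ++ flatten (nseq q.+1 p) ++ B = (A ++ p) ++ flatten (nseq q p) ++ B.
    by rewrite /= -!catA.
  rewrite [in LHS]drop_cat [in RHS]drop_cat !ltnNge size_cat c_ge.
  rewrite (_ : size A <= c - size p) /=; last by lia.
  by rewrite -subnDA addnC.
have -> : flatten (nseq q.+1 p) = flatten (nseq q p) ++ p.
  by rewrite -addn1 nseqD flatten_cat /= cats0.
have prefix : w + c <= size (A ++ flatten (nseq q p)).
  by rewrite size_cat size_flatten_nseq; lia.
by rewrite !take_drop !catA -(catA _ p) !(takel_cat _ prefix).
Qed.

End Repetition.

(* A function on P_m □ P_n given by its list of columns; [window s c] is the
   list of columns c - 2, ..., c + 2, where missing columns read as 0. *)
Definition entry (s : seq (seq nat)) (i j : nat) : nat := nth 0 (nth [::] s j) i.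

Definition total (s : seq (seq nat)) : nat := sumn (map sumn s).

Definition pad (s : seq (seq nat)) : seq (seq nat) := [:: [::]; [::]] ++ s ++ [:: [::]; [::]].

Definition window (s : seq (seq nat)) (c : nat) : seq (seq nat) := take 5 (drop c (pad s)).

Definition windows (s : seq (seq nat)) : seq (seq (seq nat)) := map (window s) (iota 0 (size s)).

Lemma entry_pad s i t : entry (pad s) i t = if t < 2 then 0 else entry s i (t - 2).
Proof.
have nil2 x : nth [::] [:: [::]; [::] : seq nat] x = [::].
  by case: x => [|[|x]] //=; rewrite nth_nil.
rewrite /entry /pad nth_cat /=; case: ltnP => _; first by rewrite nil2 nth_nil.
rewrite nth_cat; case: ltnP => // le_s; by rewrite nil2 (nth_default _ le_s).
Qed.

Lemma entry_window s c i d : d < 5 -> entry (window s c) i d = entry (pad s) i (c + d).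
Proof. by move=> lt_d5; rewrite /entry /window nth_take // nth_drop. Qed.

Lemma windows_rep_sub A p B q :
  size p + 5 <= (size p * q).+1 ->
  {subset windows (A ++ flatten (nseq q.+1 p) ++ B) <= windows (A ++ flatten (nseq q p) ++ B)}.
Proof.
move=> long_q w /mapP [c]; rewrite mem_iota !size_cat size_flatten_nseq => lt_c ->.
have pad_rep r : pad (A ++ flatten (nseq r p) ++ B) =
    ([:: [::]; [::]] ++ A) ++ flatten (nseq r p) ++ (B ++ [:: [::]; [::]]).
  by rewrite /pad !catA.
rewrite /window pad_rep take_drop_rep // -pad_rep; apply: map_f.
rewrite mem_iota !size_cat size_flatten_nseq /=.
by move: lt_c; case: ifP; lia.
Qed.

Lemma all_windows_rep (P : pred (seq (seq nat))) A p B q0 :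
  size p + 5 <= (size p * q0).+1 ->
  (forall q, q <= q0 -> all P (windows (A ++ flatten (nseq q p) ++ B))) ->
  forall q, all P (windows (A ++ flatten (nseq q p) ++ B)).
Proof.
move=> long_q0 small; elim=> [|q IH]; first exact: small.
have [|lt_q0q] := leqP q.+1 q0; first exact: small.
apply/allP => w /windows_rep_sub w_in; apply: (allP IH); apply: w_in.
by apply: leq_trans long_q0 _; rewrite ltnS leq_mul2l -ltnS lt_q0q orbT.
Qed.

Lemma big_nat_restrict (F : nat -> nat) a b c e :
  a <= c -> c <= e -> e <= b ->
  (forall t, a <= t < b -> (t < c) || (e <= t) -> F t = 0) ->
  \sum_(a <= t < b) F t = \sum_(c <= t < e) F t.
Proof.
move=> le_ac le_ce le_eb F0.
rewrite (big_cat_nat le_ac (leq_trans le_ce le_eb)) (big_cat_nat le_ce le_eb) /=.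
have -> : \sum_(a <= t < c) F t = 0.
  rewrite big_nat_cond big1 // => t /andP [/andP [le_at lt_tc] _].
  by rewrite F0 ?lt_tc // le_at (leq_trans lt_tc (leq_trans le_ce le_eb)).
have -> : \sum_(e <= t < b) F t = 0.
  rewrite big_nat_cond big1 // => t /andP [/andP [le_et lt_tb] _].
  by rewrite F0 ?le_et ?orbT // lt_tb (leq_trans le_ac (leq_trans le_ce le_et)).
by rewrite add0n addn0.
Qed.

Lemma sum_window (g h : nat -> nat) n c :
  c < n -> (forall j, n <= j -> g j = 0) -> (forall e, 2 < e -> h e = 0) ->
  \sum_(j < n) h `|j - c| * g j =
  \sum_(0 <= d < 5) h `|d - 2| * (if c + d < 2 then 0 else g (c + d - 2)).
Proof.
move=> lt_cn g0 h0.
(* [G] is the summand shifted by 2, so that the window [c, c + 5) stays in range. *)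
pose G (t : nat) := h `|t - (c + 2)| * (if t < 2 then 0 else g (t - 2)).
have -> : \sum_(0 <= d < 5) h `|d - 2| * (if c + d < 2 then 0 else g (c + d - 2)) =
          \sum_(c <= t < c + 5) G t.
  rewrite (big_addn 0 _ c) addKn; apply: eq_bigr => d _; rewrite /G addnC.
  by congr (h _ * _); lia.
rewrite -(@big_nat_restrict G 0 (n + 4) c (c + 5)) ?leq_addr //; first last.
- by move=> t _ /orP [] far; rewrite /G h0 //; lia.
- by lia.
rewrite (@big_nat_restrict G 0 (n + 4) 2 (n + 2)) //; first last.
- move=> t _ /orP [lt_t2 | le_t]; first by rewrite /G lt_t2 muln0.
  by rewrite /G (_ : t < 2 = false) ?g0 ?muln0 //; lia.
- by rewrite leq_add2l.
- by lia.
rewrite (big_addn 0 _ 2) addnK big_mkord; apply: eq_bigr => j _; rewrite /G addnK.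
by rewrite ltnNge leq_addl; congr (h _ * _); lia.
Qed.

Definition center_covered (m : nat) (w : seq (seq nat)) : bool :=
  all (fun i : nat => has (fun i' : nat => has (fun d : nat =>
      (0 < entry w i' d) && (`|i - i'| + `|d - 2| <= entry w i' d))
    (iota 0 5)) (iota 0 m)) (iota 0 m).

Definition ball_weight (m : nat) (w : seq (seq nat)) (i k : nat) : nat :=
  \sum_(0 <= i' < m) \sum_(0 <= d < 5) (`|i' - i| + `|d - 2| <= k) * entry w i' d.

Lemma entry_le b s i j : all (all (leq^~ b)) s -> entry s i j <= b.
Proof.
rewrite /entry => /allP s_le; have [lt_j | le_j] := ltnP j (size s); last first.
  by rewrite (nth_default [::] le_j) nth_nil.
have /allP col_le := s_le _ (mem_nth [::] lt_j).
have [lt_i | le_i] := ltnP i (size (nth [::] s j)); first exact: col_le _ (mem_nth 0 lt_i).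
by rewrite (nth_default 0 le_i).
Qed.

Section GridFunctions.
Variables (m n : nat) (s : seq (seq nat)).
Hypothesis size_s : size s = n.
Local Notation adj := (cart_adj (@path_adj m) (@path_adj n)).

Lemma sum_entry : all (fun col => size col == m) s ->
  \sum_(u : 'I_m * 'I_n) entry s u.1 u.2 = total s.
Proof.
move=> /allP cols_m.
rewrite -(pair_big xpredT xpredT (fun (i : 'I_m) (j : 'I_n) => entry s i j)) /= exchange_big /=.
rewrite /total sumnE big_map (big_nth [::]) size_s big_mkord; apply: eq_bigr => j _.
have /eqP size_col : size (nth [::] s j) == m by rewrite cols_m // mem_nth // size_s.
by rewrite sumnE (big_nth 0) size_col big_mkord.
Qed.

Definition grid_broadcast : broadcast ('I_m * 'I_n)%type :=
  [ffun u : 'I_m * 'I_n => inord (entry s u.1 u.2)].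

Hypothesis s_le2 : all (all (leq^~ 2)) s.

Lemma grid_broadcastE u : grid_broadcast u = entry s u.1 u.2 :> nat.
Proof. by rewrite ffunE inordK // ltnS entry_le. Qed.

Lemma cost_grid_broadcast : all (fun col => size col == m) s -> cost grid_broadcast = total s.
Proof. by move=> cols_m; rewrite /cost (eq_bigr _ (fun u _ => grid_broadcastE u)) sum_entry. Qed.

Lemma grid_broadcast_dominating :
  (forall c, c < n -> center_covered m (window s c)) -> dominating adj grid_broadcast.
Proof.
move=> cov; apply/forallP => -[i c].
have /allP /(_ i) := cov c (ltn_ord c); rewrite mem_iota ltn_ord => /(_ isT).
case/hasP => i'; rewrite mem_iota add0n => /andP [_ lt_i'] /hasP [d].
rewrite mem_iota add0n => /andP [_ lt_d].
rewrite entry_window // entry_pad; case: (ltnP (c + d) 2) => // le_2 /andP [pos near].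
have lt_j : c + d - 2 < n.
  have [le_j|//] := leqP n (c + d - 2).
  by move: pos; rewrite /entry (nth_default [::]) ?size_s // nth_nil.
apply/existsP; exists (Ordinal lt_i', Ordinal lt_j).
rewrite /hears grid_broadcastE /= pos within_grid /grid_dist /=.
by move: near; lia.
Qed.

Lemma ball_weight_window v k : k <= 2 ->
  \sum_(u | within adj k u v) entry s u.1 u.2 = ball_weight m (window s v.2) v.1 k.
Proof.
move=> le_k2; rewrite big_mkcond /=.
transitivity (\sum_(u : 'I_m * 'I_n) (`|u.1 - v.1| + `|u.2 - v.2| <= k) * entry s u.1 u.2).
  by apply: eq_bigr => u _; rewrite within_grid /grid_dist; case: ifP; rewrite ?mul1n.
rewrite -(pair_bigA _ (fun (i : 'I_m) (j : 'I_n) =>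
  (`|i - v.1| + `|j - v.2| <= k) * entry s i j)) /= /ball_weight big_mkord.
apply: eq_bigr => i' _.
rewrite (@sum_window (fun j => entry s i' j) (fun e => `|i' - v.1| + e <= k)) //.
- by apply: eq_big_nat => d /andP [_ lt_d]; rewrite entry_window // entry_pad.
- by move=> j; rewrite -size_s => le_j; rewrite /entry (nth_default [::] le_j) nth_nil.
- by move=> e lt_e; rewrite leqNgt ltn_addl // (leq_ltn_trans le_k2 lt_e).
Qed.

End GridFunctions.

Definition grid_weight (n : nat) : seq (seq nat) :=
  [:: [:: 5; 2; 2; 5]; [:: 2; 0; 0; 2]] ++ nseq (n - 4) [:: 3; 1; 1; 3] ++
  [:: [:: 2; 0; 0; 2]; [:: 5; 2; 2; 5]].

Definition light_balls (w : seq (seq nat)) : bool :=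
  all (fun i => all (fun k => ball_weight 4 w i k <= 10 * k) [:: 1; 2]) (iota 0 4).

Lemma total_grid_weight n : 4 <= n -> total (grid_weight n) = 8 * n + 4.
Proof. by move=> le4n; rewrite /total !map_cat !sumn_cat map_nseq sumn_nseq /=; lia. Qed.

Lemma grid_weight_light_balls n : 4 <= n -> all light_balls (windows (grid_weight n)).
Proof.
move=> /subnK <-; move: (n - 4) => q.
have -> : grid_weight (q + 4) = [:: [:: 5; 2; 2; 5]; [:: 2; 0; 0; 2]] ++
    flatten (nseq q [:: [:: 3; 1; 1; 3]]) ++ [:: [:: 2; 0; 0; 2]; [:: 5; 2; 2; 5]].
  by rewrite /grid_weight addnK; congr (_ ++ (_ ++ _)); elim: q => //= q ->.
apply: (all_windows_rep (q0 := 5)) => // {}q le_q5.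
have small : all (fun q => all light_balls (windows ([:: [:: 5; 2; 2; 5]; [:: 2; 0; 0; 2]] ++
    flatten (nseq q [:: [:: 3; 1; 1; 3]]) ++ [:: [:: 2; 0; 0; 2]; [:: 5; 2; 2; 5]])))
    (iota 0 6).
  by rewrite /light_balls /ball_weight unlock; vm_compute.
by apply: (allP small); rewrite mem_iota.
Qed.

Lemma grid_cost_lower n f : 4 <= n -> dominating (@grid_adj n) f -> 8 * n + 4 <= 10 * cost f.
Proof.
move=> le4n domf; have size_w : size (grid_weight n) = n.
  by rewrite !size_cat size_nseq /=; lia.
rewrite -total_grid_weight // -(@sum_entry 4 n _ size_w); last first.
  by rewrite !all_cat all_nseq /= orbT.
apply: (weight_le_cost domf) => v pos_fv; have le_fv2 : f v <= 2 by rewrite -ltnS.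
rewrite (ball_weight_window _ _ le_fv2) //.
have /allP /(_ v.1) : light_balls (window (grid_weight n) v.2).
  by apply: (allP (grid_weight_light_balls le4n)); apply: map_f; rewrite mem_iota size_w /=.
rewrite mem_iota ltn_ord => /(_ isT) /allP; apply.
by move: pos_fv le_fv2; case: (f v : nat) => [|[|[|]]].
Qed.

Lemma c_tab_le r : r < 10 -> 10 * c_tab r <= 8 * r + 13.
Proof. by case: r => [|[|[|[|[|[|[|[|[|[|]]]]]]]]]]. Qed.

Lemma gamma_b2_grid_lower n : 4 <= n ->
  8 * (n %/ 10) + c_tab (n %% 10) <= gamma_b2 (@grid_adj n).
Proof.
move=> le4n; apply: leq_gamma_b2 => f domf.
have := grid_cost_lower le4n domf; have := c_tab_le (ltn_pmod n (isT : 0 < 10)).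
have := divn_eq n 10; lia.
Qed.

Definition columns (rows : seq (seq nat)) : seq (seq nat) :=
  [seq [seq nth 0 x j | x <- rows] | j <- iota 0 (size (head [::] rows))].

(* Tables are written row by row.  [grid_pattern rho q] is the column [0; 1; 0; 0],
   q blocks of cost 8 and an end block; it has 10 q + rho columns for rho = 4, 5, 9
   and 10 (q + 1) + 1 columns for rho = 1. *)
Definition left_end : seq (seq nat) := [:: [:: 0; 1; 0; 0]].

Definition period : seq (seq nat) := columns
  [:: [:: 0; 1; 0; 0; 0; 1; 0; 0; 0; 0];
      [:: 0; 0; 0; 0; 0; 0; 0; 0; 2; 0];
      [:: 0; 0; 0; 2; 0; 0; 0; 0; 0; 0];
      [:: 1; 0; 0; 0; 0; 0; 1; 0; 0; 0]].

Definition right_end (rho : nat) : seq (seq nat) := columns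
  match rho with
  | 1 => [:: [:: 0; 1; 0; 0; 0; 0; 2; 0; 0; 0];
             [:: 0; 0; 0; 0; 0; 0; 0; 0; 0; 1];
             [:: 0; 0; 0; 2; 0; 0; 0; 0; 0; 0];
             [:: 1; 0; 0; 0; 0; 0; 0; 2; 0; 0]]
  | 4 => [:: [:: 0; 1; 0];
             [:: 0; 0; 0];
             [:: 0; 0; 1];
             [:: 1; 0; 0]]
  | 5 => [:: [:: 0; 1; 0; 0];
             [:: 0; 0; 0; 1];
             [:: 0; 0; 0; 0];
             [:: 0; 2; 0; 0]]
  | 9 => [:: [:: 0; 1; 0; 0; 0; 1; 0; 0];
             [:: 0; 0; 0; 0; 0; 0; 0; 1];
             [:: 0; 0; 0; 2; 0; 0; 0; 0];
             [:: 1; 0; 0; 0; 0; 0; 1; 0]]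
  | _ => [::]
  end.

Definition grid_pattern (rho q : nat) : seq (seq nat) :=
  left_end ++ flatten (nseq q period) ++ right_end rho.

Lemma total_cat s t : total (s ++ t) = total s + total t.
Proof. by rewrite /total map_cat sumn_cat. Qed.

Lemma total_flatten_nseq q p : total (flatten (nseq q p)) = total p * q.
Proof. by elim: q => [|q IH]; rewrite ?muln0 //= total_cat IH mulnS. Qed.

Lemma size_grid_pattern rho q : size (grid_pattern rho q) = 10 * q + size (right_end rho) + 1.
Proof. by rewrite !size_cat size_flatten_nseq [size left_end]/= [size period]/=; lia. Qed.

Lemma total_grid_pattern rho q : total (grid_pattern rho q) = 8 * q + total (right_end rho) + 1.
Proof.
have [left_1 period_8] : total left_end = 1 /\ total period = 8 by [].
by rewrite !total_cat total_flatten_nseq left_1 period_8; lia.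
Qed.

Lemma grid_pattern_shape rho q : rho \in [:: 1; 4; 5; 9] ->
  all (fun col => size col == 4) (grid_pattern rho q) /\ all (all (leq^~ 2)) (grid_pattern rho q).
Proof.
by rewrite !all_cat !all_flatten_nseq !inE => /or4P [] /eqP ->; rewrite !orbT.
Qed.

Lemma grid_pattern_center_covered rho q : rho \in [:: 1; 4; 5; 9] ->
  all (center_covered 4) (windows (grid_pattern rho q)).
Proof.
move=> rho_in; apply: (all_windows_rep (q0 := 2)) => // {}q le_q2.
have small : all (fun rho => all (fun q => all (center_covered 4) (windows (grid_pattern rho q)))
    (iota 0 3)) [:: 1; 4; 5; 9] by vm_compute.
by apply: (allP (allP small _ rho_in)); rewrite mem_iota.
Qed.

Lemma grid_pattern_fit n : 4 <= n -> n %% 10 \in [:: 1; 4; 5; 9] ->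
  exists q, size (grid_pattern (n %% 10) q) = n /\
            total (grid_pattern (n %% 10) q) = 8 * (n %/ 10) + c_tab (n %% 10).
Proof.
move=> le4n rho_in; exists (n %/ 10 - (n %% 10 == 1)).
have [] : [/\ total (right_end 1) = 9, total (right_end 4) = 3,
            total (right_end 5) = 4 & total (right_end 9) = 7] by [].
rewrite size_grid_pattern total_grid_pattern /c_tab; have := divn_eq n 10.
by move: rho_in; rewrite !inE => /or4P [] /eqP -> /=; lia.
Qed.

Lemma gamma_b2_grid_upper n : 4 <= n -> n %% 10 \in [:: 1; 4; 5; 9] ->
  gamma_b2 (@grid_adj n) <= 8 * (n %/ 10) + c_tab (n %% 10).
Proof.
move=> le4n rho_in; have [q [size_q total_q]] := grid_pattern_fit le4n rho_in.
have [sizes le2] := grid_pattern_shape q rho_in.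
rewrite -total_q -(cost_grid_broadcast size_q le2 sizes).
apply/gamma_b2_le_cost/(grid_broadcast_dominating size_q le2) => c lt_cn.
by apply: (allP (grid_pattern_center_covered q rho_in)); apply: map_f; rewrite mem_iota size_q.
Qed.

Theorem corollary4p10 :
  (forall n : nat, 4 <= n ->
     8 * (n %/ 10) + c_tab (n %% 10) <= gamma_b2 (@grid_adj n)) /\
  (forall n : nat, 4 <= n -> n %% 10 \in [:: 1; 4; 5; 9] ->
     gamma_b2 (@grid_adj n) = 8 * (n %/ 10) + c_tab (n %% 10)).
Proof.
split=> [n | n le4n rho_in]; first exact: gamma_b2_grid_lower.
by apply/eqP; rewrite eqn_leq gamma_b2_grid_upper // gamma_b2_grid_lower.
Qed.
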